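(* Let $\mathcal{A}$ and $\mathcal{B}$ be two copies of the same finite-dimensional Hilbert space and $\rho$ a density operator on $\mathcal{A}\otimes\mathcal{B}$. Then the swap test on $\mathcal{A}\otimes\mathcal{B}$ applied to $\rho$ returns the antisymmetric outcome with probability at least $\tfrac12-\tfrac12F(\operatorname{tr}_{\mathcal{A}}\rho,\operatorname{tr}_{\mathcal{B}}\rho)$.
   Context: Let $W$ be the swap operator on $\mathcal{A}\otimes\mathcal{B}$, $W|a\rangle|b\rangle=|b\rangle|a\rangle$. The swap test is the two-outcome projective measurement $\{(\mathbb{1}+W)/2,(\mathbb{1}-W)/2\}$ (projections onto the symmetric and antisymmetric subspaces); the antisymmetric outcome occurs with probability $\operatorname{tr}\big(\tfrac{\mathbb{1}-W}{2}\rho\big)$. Fidelity: $F(\sigma,\xi)=\operatorname{tr}\sqrt{\sqrt\sigma\,\xi\sqrt\sigma}$; the two reduced states $\operatorname{tr}_{\mathcal{A}}\rho$ and $\operatorname{tr}_{\mathcal{B}}\rho$ are regarded as density operators on the same space via the identification of $\mathcal{A}$ and $\mathcal{B}$. *)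

(* Complex scalars: an arbitrary numClosedFieldType C
   (e.g. algC, or complex R for a real closed field R). *)
From HB Require Import structures.
From mathcomp Require Import all_boot all_order all_algebra.
Set Implicit Arguments. Unset Strict Implicit. Unset Printing Implicit Defensive.
Import Order.TTheory GRing.Theory Num.Theory.
Local Open Scope ring_scope.

Section QDefs.
Variable C : numClosedFieldType.

Definition adjmx m n (A : 'M[C]_(m, n)) : 'M[C]_(n, m) := (map_mx Num.conj A)^T.

Definition psdmx m (A : 'M[C]_m) : Prop :=
  adjmx A = A /\ forall v : 'rV[C]_m, 0 <= (v *m A *m adjmx v) 0 0.

Definition density m (A : 'M[C]_m) : Prop := psdmx A /\ \tr A = 1.

(* matrix square root via the spectral decomposition A = P^-1 diag(d) P
   (P unitary, available for normal A, in particular for PSD A):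
   sqrt A = P^-1 diag(sqrt d) P.  For PSD A this is the unique PSD square root. *)
Definition sqrtmx m (A : 'M[C]_m) : 'M[C]_m :=
  invmx (spectralmx A) *m diag_mx (map_mx sqrtC (spectral_diag A)) *m spectralmx A.

Definition fidelity m (s x : 'M[C]_m) : C :=
  \tr (sqrtmx (sqrtmx s *m x *m sqrtmx s)).

(* A (x) B with A = B = C^n: basis vector |a>|b> has index mxvec_index a b. *)

(* swap operator W = sum_{a,b} |b a><a b|, i.e. W |a>|b> = |b>|a> *)
Definition swapmx n : 'M[C]_(n * n) :=
  \sum_(a < n) \sum_(b < n) delta_mx (mxvec_index b a) (mxvec_index a b).

Definition ptrA n (rho : 'M[C]_(n * n)) : 'M[C]_n :=
  \matrix_(b, b') \sum_(a < n) rho (mxvec_index a b) (mxvec_index a b').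

Definition ptrB n (rho : 'M[C]_(n * n)) : 'M[C]_n :=
  \matrix_(a, a') \sum_(b < n) rho (mxvec_index a b) (mxvec_index a' b).

Definition antisym_prob n (rho : 'M[C]_(n * n)) : C :=
  \tr ((2^-1) *: (1%:M - swapmx n) *m rho).

End QDefs.

From HB Require Import structures.
From mathcomp Require Import all_boot all_order all_algebra.
From mathcomp Require Import ring.
Import Order.TTheory GRing.Theory Num.Theory.
Local Open Scope ring_scope.
Set Implicit Arguments. Unset Strict Implicit. Unset Printing Implicit Defensive.

(* Write rho = R R^* and reshape R into two matrices X, Y whose rows are indexed
   by the first, resp. second, tensor factor.  Then X X^* = tr_B rho,
   Y Y^* = tr_A rho and tr (X^* Y) = tr (W rho), so Uhlmann's inequality
   Re tr (X^* Y) <= F (Y Y^*, X X^* ) gives tr (W rho) <= F, while the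
   antisymmetric outcome has probability (1 - tr (W rho)) / 2.  Uhlmann's
   inequality itself: Y = sqrt (Y Y^* ) Z for a contraction Z, hence
   tr (X^* Y) = tr (Z (S X)^* ) with S = sqrt (Y Y^* ), and Cauchy-Schwarz in an
   eigenbasis of (S X) (S X)^* bounds its real part by tr sqrt ((S X) (S X)^* ). *)

Section Adjoint.
Variable C : numClosedFieldType.

Lemma adjmxE m n (A : 'M[C]_(m, n)) i j : adjmx A i j = (A j i)^*.
Proof. by rewrite /adjmx !mxE. Qed.

Lemma adjmx_trmxC m n (A : 'M[C]_(m, n)) : adjmx A = (A ^t*)%sesqui.
Proof. by rewrite /adjmx map_trmx. Qed.

Lemma adjmxK m n (A : 'M[C]_(m, n)) : adjmx (adjmx A) = A.
Proof. by apply/matrixP => i j; rewrite !adjmxE conjCK. Qed.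

Lemma adjmxM m n p (A : 'M[C]_(m, n)) (B : 'M[C]_(n, p)) :
  adjmx (A *m B) = adjmx B *m adjmx A.
Proof. by rewrite /adjmx map_mxM trmx_mul. Qed.

Lemma adjmx_diag m (d : 'rV[C]_m) :
  adjmx (diag_mx d) = diag_mx (map_mx Num.conj d).
Proof. by rewrite /adjmx map_diag_mx tr_diag_mx. Qed.

Lemma adjmx_diag_ge0 m (d : 'rV[C]_m) :
  (forall i, 0 <= d 0 i) -> adjmx (diag_mx d) = diag_mx d.
Proof.
move=> d_ge0; rewrite adjmx_diag; congr diag_mx.
by apply/matrixP => i j; rewrite mxE ord1 geC0_conj.
Qed.

Lemma mulmx_adj_row m N (A B : 'M[C]_(m, N)) i :
  (row i A *m adjmx (row i B)) 0 0 = (A *m adjmx B) i i.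
Proof. by rewrite !mxE; apply: eq_bigr => k _; rewrite !mxE. Qed.

Lemma mulmx_adj_diag_eq0 m N (M : 'M[C]_(m, N)) i k :
  (M *m adjmx M) i i = 0 -> M i k = 0.
Proof.
rewrite mxE => /psumr_eq0P eq0; apply/eqP; rewrite -normr_eq0 -sqrf_eq0 normCK.
by rewrite -adjmxE eq0 // => j _; rewrite adjmxE mul_conjC_ge0.
Qed.

Lemma unitarymx_mulmx_adj m n (P : 'M[C]_(m, n)) :
  P \is unitarymx -> P *m adjmx P = 1%:M.
Proof. by rewrite adjmx_trmxC => /unitarymxP. Qed.

Lemma invmx_unitary_adj m (P : 'M[C]_m) : P \is unitarymx -> invmx P = adjmx P.
Proof. by rewrite adjmx_trmxC; apply: invmx_unitary. Qed.

Lemma unitarymx_adj_mulmx m (P : 'M[C]_m) :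
  P \is unitarymx -> adjmx P *m P = 1%:M.
Proof. by move=> Pu; rewrite -invmx_unitary_adj // mulVmx // unitarymx_unit. Qed.

End Adjoint.

Section SquareRoot.
Variable C : numClosedFieldType.

Lemma psdmx_normal m (A : 'M[C]_m) : psdmx A -> A \is normalmx.
Proof. by case=> A_herm _; apply/eqP; rewrite -!adjmx_trmxC A_herm. Qed.

Lemma psdmx_spectral m (A : 'M[C]_m) : psdmx A ->
  A = adjmx (spectralmx A) *m diag_mx (spectral_diag A) *m spectralmx A.
Proof.
move=> /psdmx_normal/orthomx_spectralP {1}->.
by rewrite invmx_unitary_adj ?spectral_unitarymx.
Qed.

Lemma psdmx_spectral_diag_ge0 m (A : 'M[C]_m) i :
  psdmx A -> 0 <= spectral_diag A 0 i.
Proof.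
move=> psdA; have PPt := unitarymx_mulmx_adj (spectral_unitarymx A).
have := psdA.2 (row i (spectralmx A)); rewrite -row_mul mulmx_adj_row.
rewrite [in X in (_ *m X *m _)](psdmx_spectral psdA) !mulmxA PPt mul1mx.
by rewrite -mulmxA PPt mulmx1 mxE eqxx mulr1n.
Qed.

Lemma mxtrace_sqrtmx m (A : 'M[C]_m) :
  \tr (sqrtmx A) = \sum_i sqrtC (spectral_diag A 0 i).
Proof.
rewrite /sqrtmx mxtrace_mulC mulmxA mulmxV ?spectral_unit // mul1mx mxtrace_diag.
by apply: eq_bigr => i _; rewrite mxE.
Qed.

Lemma sqrtmx_psd m (A : 'M[C]_m) : psdmx A ->
  adjmx (sqrtmx A) = sqrtmx A /\ sqrtmx A *m sqrtmx A = A.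
Proof.
move=> psdA; have Pu := spectral_unitarymx A.
have sqrt_ge0 i : 0 <= map_mx sqrtC (spectral_diag A) 0 i.
  by rewrite mxE sqrtC_ge0 psdmx_spectral_diag_ge0.
rewrite /sqrtmx invmx_unitary_adj //; split.
  by rewrite !adjmxM adjmxK adjmx_diag_ge0 // mulmxA.
rewrite [RHS](psdmx_spectral psdA) -!mulmxA (mulmxA (spectralmx A)).
rewrite unitarymx_mulmx_adj // mul1mx (mulmxA (diag_mx _)) mulmx_diag.
congr (_ *m (diag_mx _ *m _)).
by apply/matrixP => i j; rewrite !mxE ord1 -expr2 sqrtCK.
Qed.

Lemma psdmx_gram m N (M : 'M[C]_(m, N)) : psdmx (M *m adjmx M).
Proof.
split; first by rewrite adjmxM adjmxK.
move=> v; rewrite mulmxA -mulmxA -adjmxM mxE sumr_ge0 // => k _.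
by rewrite adjmxE mul_conjC_ge0.
Qed.

End SquareRoot.

Section Uhlmann.
Variable C : numClosedFieldType.

Definition contractionmx m N (Z : 'M[C]_(m, N)) : Prop :=
  forall v : 'rV[C]_m, (v *m Z *m adjmx (v *m Z)) 0 0 <= (v *m adjmx v) 0 0.

Lemma mulmx_diag_adj_row m (w e : 'rV[C]_m) :
  (w *m diag_mx e *m adjmx w) 0 0 = \sum_j e 0 j * (w 0 j * (w 0 j)^*).
Proof.
by rewrite mxE; apply: eq_bigr => j _; rewrite mul_mx_diag adjmxE !mxE; ring.
Qed.

Lemma contractionmx_spectral m N (Z : 'M[C]_(m, N)) (Q : 'M[C]_m) (e : 'rV[C]_m) :
  Q \is unitarymx -> (forall j, 0 <= e 0 j <= 1) ->
  Z *m adjmx Z = adjmx Q *m diag_mx e *m Q -> contractionmx Z.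
Proof.
move=> Qu e01 ZZt v; set w := v *m adjmx Q.
have -> : v *m Z *m adjmx (v *m Z) = w *m diag_mx e *m adjmx w.
  by rewrite adjmxM -mulmxA (mulmxA Z) ZZt /w adjmxM adjmxK !mulmxA.
have -> : v *m adjmx v = w *m adjmx w.
  by rewrite /w adjmxM adjmxK -mulmxA (mulmxA _ Q) unitarymx_adj_mulmx // mul1mx.
rewrite mulmx_diag_adj_row mxE; apply: ler_sum => j _; rewrite adjmxE.
by have /andP[_ e1] := e01 j; rewrite ler_piMl // mul_conjC_ge0.
Qed.

Lemma sqrtC_mulV (x : C) : sqrtC x * (sqrtC x)^-1 = (x != 0)%:R.
Proof.
have [->|x0] := eqVneq x 0; first by rewrite sqrtC0 mul0r.
by rewrite mulfV // sqrtC_eq0.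
Qed.

Lemma invsqrtC_mul_invsqrtC (x : C) :
  (sqrtC x)^-1 * x * (sqrtC x)^-1 = (x != 0)%:R.
Proof.
have [->|x0] := eqVneq x 0; first by rewrite mulr0 mul0r.
by rewrite -{2}[x]sqrtCK expr2 mulrA mulVf ?sqrtC_eq0 // mul1r sqrtC_mulV x0.
Qed.

Lemma sqrtmx_gram_factor m N (Y : 'M[C]_(m, N)) :
  exists2 Z, contractionmx Z & sqrtmx (Y *m adjmx Y) *m Z = Y.
Proof.
set s := Y *m adjmx Y; have psd_s : psdmx s := psdmx_gram Y.
have s_spec := psdmx_spectral psd_s.
set Q := spectralmx s in s_spec *; set mu := spectral_diag s in s_spec *.
have Qu : Q \is unitarymx := spectral_unitarymx s.
have QQt := unitarymx_mulmx_adj Qu; have QtQ := unitarymx_adj_mulmx Qu.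
have mu_ge0 i : 0 <= mu 0 i := psdmx_spectral_diag_ge0 i psd_s.
pose nu : 'rV[C]_m := \row_i (sqrtC (mu 0 i))^-1.
pose supp : 'rV[C]_m := \row_i (mu 0 i != 0)%:R.
have QY_gram : Q *m Y *m adjmx (Q *m Y) = diag_mx mu.
  rewrite adjmxM mulmxA -(mulmxA Q) -/s s_spec !mulmxA QQt mul1mx.
  by rewrite -mulmxA QQt mulmx1.
have QY_supp : diag_mx supp *m (Q *m Y) = Q *m Y.
  apply/matrixP => i k; rewrite mul_diag_mx mxE [supp 0 i]mxE.
  have [mu0|] := eqVneq (mu 0 i) 0; last by rewrite mul1r.
  rewrite mul0r; apply/esym/mulmx_adj_diag_eq0.
  by rewrite QY_gram mxE eqxx mu0.
(* Z = S^+ Y, where S^+ = Q^* diag nu Q is the pseudo-inverse of S = sqrt s. *)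
exists (adjmx Q *m diag_mx nu *m Q *m Y).
  apply: (contractionmx_spectral (e := supp) Qu).
    by move=> j; rewrite mxE; case: (_ != 0); rewrite ?lexx ?ler01.
  have nu_ge0 i : 0 <= nu 0 i by rewrite mxE invr_ge0 sqrtC_ge0.
  rewrite !adjmxM adjmxK adjmx_diag_ge0 // !mulmxA.
  rewrite -(mulmxA _ Y) -/s s_spec !mulmxA.
  rewrite -(mulmxA _ Q (adjmx Q)) QQt mulmx1 -(mulmxA _ Q (adjmx Q)) QQt mulmx1.
  rewrite -!(mulmxA (adjmx Q)) !mulmx_diag; congr (_ *m (diag_mx _ *m _)).
  by apply/rowP => i; rewrite !mxE invsqrtC_mul_invsqrtC.
rewrite /sqrtmx invmx_unitary_adj // -/Q -/mu !mulmxA.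
rewrite -(mulmxA _ Q (adjmx Q)) QQt mulmx1.
rewrite -(mulmxA _ (diag_mx _) (diag_mx nu)) mulmx_diag.
have -> : \row_j (map_mx sqrtC mu 0 j * nu 0 j) = supp.
  by apply/rowP => i; rewrite !mxE sqrtC_mulV.
by rewrite -!mulmxA QY_supp mulmxA QtQ mul1mx.
Qed.

Lemma Re_mxtrace_contraction_le m N (B Z : 'M[C]_(m, N)) :
  contractionmx Z -> 'Re (\tr (Z *m adjmx B)) <= \tr (sqrtmx (B *m adjmx B)).
Proof.
move=> Zc; set K := B *m adjmx B; have psdK : psdmx K := psdmx_gram B.
have K_spec := psdmx_spectral psdK.
set P := spectralmx K in K_spec *; set lam := spectral_diag K in K_spec *.
have Pu : P \is unitarymx := spectral_unitarymx K.
have PPt := unitarymx_mulmx_adj Pu.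
have -> : \tr (Z *m adjmx B) = \sum_i (row i (P *m Z) *m adjmx (row i (P *m B))) 0 0.
  under eq_bigr do rewrite mulmx_adj_row.
  rewrite -[RHS]/(\tr (P *m Z *m adjmx (P *m B))) adjmxM mulmxA [RHS]mxtrace_mulC.
  by rewrite !mulmxA unitarymx_adj_mulmx // mul1mx.
rewrite mxtrace_sqrtmx; apply: le_trans (leif_Re_Creal _).1 _.
apply: le_trans (ler_norm_sum _ _ _) _; apply: ler_sum => i _.
rewrite adjmx_trmxC -dotmxE.
apply: le_trans (CauchySchwarz_sqrt (@dotmx C N) _ _).1 _.
have normPB : dotmx (row i (P *m B)) (row i (P *m B)) = lam 0 i.
  rewrite dotmxE -adjmx_trmxC mulmx_adj_row adjmxM mulmxA -(mulmxA P B) -/K.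
  by rewrite K_spec !mulmxA PPt mul1mx -mulmxA PPt mulmx1 mxE eqxx mulr1n.
have normPZ : dotmx (row i (P *m Z)) (row i (P *m Z)) <= 1.
  rewrite dotmxE -adjmx_trmxC !row_mul.
  apply: le_trans (Zc (row i P)) _.
  by rewrite mulmx_adj_row PPt mxE eqxx.
(* [change] folds the bound of [CauchySchwarz_sqrt], stated for the form
   structure, back to plain [dotmx]. *)
change (sqrtC (dotmx (row i (P *m Z)) (row i (P *m Z))) *
  sqrtC (dotmx (row i (P *m B)) (row i (P *m B))) <= sqrtC (lam 0 i)).
rewrite normPB -[X in _ <= X]mul1r ler_wpM2r ?sqrtC_ge0 ?psdmx_spectral_diag_ge0 //.
by rewrite -sqrtC1 ler_sqrtC // nnegrE // dnorm_ge0.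
Qed.

Lemma Re_mxtrace_le_fidelity m N (X Y : 'M[C]_(m, N)) :
  'Re (\tr (adjmx X *m Y)) <= fidelity (Y *m adjmx Y) (X *m adjmx X).
Proof.
have [Z Zc SZ] := sqrtmx_gram_factor Y.
have [S_herm _] := sqrtmx_psd (psdmx_gram Y).
set S := sqrtmx (Y *m adjmx Y) in SZ S_herm *.
rewrite -{1}SZ /fidelity -/S mulmxA mxtrace_mulC -{1}S_herm -adjmxM.
have -> : S *m (X *m adjmx X) *m S = S *m X *m adjmx (S *m X).
  by rewrite adjmxM S_herm !mulmxA.
exact: Re_mxtrace_contraction_le.
Qed.

End Uhlmann.

Section Swap.
Variables (C : numClosedFieldType) (n : nat).

Lemma mxtrace_delta_mul m (A : 'M[C]_m) i j : \tr (delta_mx i j *m A) = A j i.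
Proof.
rewrite /mxtrace (bigD1 i) //= big1 ?addr0; last first.
  by move=> k /negPf ki; rewrite mxE big1 // => l _; rewrite mxE ki mul0r.
rewrite mxE (bigD1 j) //= big1 ?addr0; last first.
  by move=> l /negPf lj; rewrite mxE lj andbF mul0r.
by rewrite mxE !eqxx mul1r.
Qed.

Lemma big_mxvec_index m p (F : 'I_(m * p) -> C) :
  \sum_j F j = \sum_a \sum_b F (mxvec_index a b).
Proof.
rewrite pair_big /= (reindex (uncurry (@mxvec_index m p))) /=.
  by apply: eq_bigr => -[a b].
have [g g1 g2] := curry_mxvec_bij m p.
by exists g => x _; [apply: g1 | apply: g2].
Qed.

Lemma mxtrace_swapmx (rho : 'M[C]_(n * n)) :
  \tr (swapmx C n *m rho) = \sum_a \sum_b rho (mxvec_index a b) (mxvec_index b a).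
Proof.
rewrite /swapmx mulmx_suml raddf_sum; apply: eq_bigr => a _.
by rewrite mulmx_suml raddf_sum; apply: eq_bigr => b _; apply: mxtrace_delta_mul.
Qed.

Lemma mxtrace_swapmx_real (rho : 'M[C]_(n * n)) :
  adjmx rho = rho -> 'Re (\tr (swapmx C n *m rho)) = \tr (swapmx C n *m rho).
Proof.
move=> rho_herm; apply/Creal_ReP/CrealP.
rewrite !mxtrace_swapmx rmorph_sum exchange_big; apply: eq_bigr => a _.
rewrite rmorph_sum; apply: eq_bigr => b _.
by rewrite -{2}rho_herm adjmxE.
Qed.

Lemma antisym_probE (rho : 'M[C]_(n * n)) :
  antisym_prob rho = 2^-1 * (\tr rho - \tr (swapmx C n *m rho)).
Proof. by rewrite /antisym_prob -scalemxAl mxtraceZ mulmxBl mul1mx linearB. Qed.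

Variable N : nat.

Definition reshape_fst (R : 'M[C]_(n * n, N)) : 'M[C]_(n, n * N) :=
  \matrix_(a < n) mxvec (\matrix_(b < n, k < N) R (mxvec_index a b) k).

Definition reshape_snd (R : 'M[C]_(n * n, N)) : 'M[C]_(n, n * N) :=
  \matrix_(b < n) mxvec (\matrix_(a < n, k < N) R (mxvec_index a b) k).

Lemma reshape_fstE R a b k : reshape_fst R a (mxvec_index b k) = R (mxvec_index a b) k.
Proof. by rewrite !mxE mxvecE mxE. Qed.

Lemma reshape_sndE R a b k : reshape_snd R b (mxvec_index a k) = R (mxvec_index a b) k.
Proof. by rewrite !mxE mxvecE mxE. Qed.

Lemma ptrB_gram (R : 'M[C]_(n * n, N)) :
  ptrB (R *m adjmx R) = reshape_fst R *m adjmx (reshape_fst R).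
Proof.
apply/matrixP => a a'; rewrite !mxE big_mxvec_index; apply: eq_bigr => b _.
by rewrite mxE; apply: eq_bigr => k _; rewrite !adjmxE !reshape_fstE.
Qed.

Lemma ptrA_gram (R : 'M[C]_(n * n, N)) :
  ptrA (R *m adjmx R) = reshape_snd R *m adjmx (reshape_snd R).
Proof.
apply/matrixP => b b'; rewrite !mxE big_mxvec_index; apply: eq_bigr => a _.
by rewrite mxE; apply: eq_bigr => k _; rewrite !adjmxE !reshape_sndE.
Qed.

Lemma mxtrace_reshape (R : 'M[C]_(n * n, N)) :
  \tr (adjmx (reshape_fst R) *m reshape_snd R) = \tr (swapmx C n *m (R *m adjmx R)).
Proof.
rewrite mxtrace_swapmx exchange_big mxtrace_mulC; apply: eq_bigr => b _.
rewrite mxE big_mxvec_index; apply: eq_bigr => a _.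
by rewrite mxE; apply: eq_bigr => k _; rewrite !adjmxE reshape_fstE reshape_sndE.
Qed.

End Swap.

Unset Implicit Arguments.
Theorem lemma4p3 (C : numClosedFieldType) (n : nat) (rho : 'M[C]_(n * n)) :
  density rho ->
  2^-1 - 2^-1 * fidelity (ptrA rho) (ptrB rho) <= antisym_prob rho.
Proof.
move=> [psd_rho tr_rho].
have [R_herm RR] := sqrtmx_psd psd_rho.
have rho_gram : rho = sqrtmx rho *m adjmx (sqrtmx rho) by rewrite R_herm RR.
have := Re_mxtrace_le_fidelity (reshape_fst (sqrtmx rho)) (reshape_snd (sqrtmx rho)).
rewrite -ptrA_gram -ptrB_gram mxtrace_reshape -rho_gram.
rewrite mxtrace_swapmx_real ?psd_rho.1 // => le_swap_fidelity.
rewrite antisym_probE tr_rho -[X in X - _]mulr1 -mulrBr.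
by rewrite ler_wpM2l ?invr_ge0 ?ler0n // lerD2l lerN2.
Qed.
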